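(* Let $\mathcal{H}$ be the positive orthant of the unit sphere $\mathbf{S}^\infty$ of $L^2(\mathbb{R}^n)$ (i.e., the set of a.e. nonnegative functions of unit $L^2$ norm), equipped with $d_S$. Let $\mathbf{m}_{k-1}, \mathbf{x}_k \in \mathcal{H}$ with $\langle \mathbf{m}_{k-1}, \mathbf{x}_k\rangle > 0$ and $\mathbf{m}_{k-1} \neq \mathbf{x}_k$, and let $w_k \in [0,1)$. Set $\theta = \arccos(\langle \mathbf{m}_{k-1}, \mathbf{x}_k\rangle) \in (0, \pi/2)$, $c = \tan\theta$, and $$ \alpha = \arctan\!\left( \frac{-1 + \sqrt{4c^2(1-w_k) - 4c^2(1-w_k)^2 + 1}}{2c(1-w_k)} \right). $$ Then the minimizer over $\mathbf{x} \in \mathcal{H}$ of $$ w_k\, d_S^2(\mathbf{x}_k, \mathbf{x}) + (1-w_k)\, d_S^2(\mathbf{m}_{k-1}, \mathbf{x}) $$ is $$ \mathbf{m}_k = \frac{\sin(\theta - \alpha)}{\sin\theta}\, \mathbf{m}_{k-1} + \frac{\sin\alpha}{\sin\theta}\, \mathbf{x}_k. $$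
   Context: $\mathbf{S}^\infty$ denotes the unit sphere of the Hilbert space $L^2(\mathbb{R}^n)$ with inner product $\langle\cdot,\cdot\rangle$. For $\widetilde f, \widetilde g \in \mathbf{S}^\infty$ with $\langle \widetilde f, \widetilde g\rangle \neq 0$, $d_S(\widetilde f, \widetilde g) = \sqrt{-\log \langle \widetilde f, \widetilde g\rangle^2}$ (and $d_S = +\infty$ if the inner product is $0$). *)

From HB Require Import structures.
From mathcomp Require Import all_boot all_order all_algebra.
From mathcomp Require Import all_classical all_reals all_analysis.

Set Implicit Arguments.
Unset Strict Implicit.
Unset Printing Implicit Defensive.
Import Order.TTheory GRing.Theory Num.Theory.

Local Open Scope classical_set_scope.
Local Open Scope ring_scope.

Section L2Sphere.
Context {R : realType} {n : nat}.

(* R^n is rendered as n.-tuple R, equipped (by MathComp-Analysis) with the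
   sigma-algebra generated by the coordinate projections, i.e. the Borel
   sigma-algebra of R^n. *)

(* mu is the n-dimensional Lebesgue measure: it assigns to every half-open
   box ]a,b] = prod_i ]a_i, b_i] its volume prod_i (b_i - a_i)^+.  This
   characterizes Lebesgue measure uniquely on the Borel sets of R^n. *)
Definition is_lebesgue_Rn (mu : {measure set (n.-tuple R) -> \bar R}) : Prop :=
  forall a b : n.-tuple R,
    mu [set x | forall i : 'I_n, tnth a i < tnth x i <= tnth b i] =
    (\prod_(i < n) Num.max 0 (tnth b i - tnth a i))%:E.

Variable mu : {measure set (n.-tuple R) -> \bar R}.

Definition L2 (f : n.-tuple R -> R) : Prop :=
  measurable_fun [set: n.-tuple R] f /\
  mu.-integrable [set: n.-tuple R] (fun x => (f x ^+ 2)%:E).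

Definition ip (f g : n.-tuple R -> R) : R :=
  Rintegral mu [set: n.-tuple R] (fun x => f x * g x).

Definition Horth (f : n.-tuple R -> R) : Prop :=
  L2 f /\ ip f f = 1 /\ {ae mu, forall x, 0 <= f x}.

Definition dS (f g : n.-tuple R -> R) : \bar R :=
  if ip f g == 0 then +oo%E else (Num.sqrt (- ln (ip f g ^+ 2)))%:E.

Definition objective (w : R) (xk m x : n.-tuple R -> R) : \bar R :=
  (w%:E * (dS xk x * dS xk x) + (1 - w)%:E * (dS m x * dS m x))%E.

End L2Sphere.

From HB Require Import structures.
From mathcomp Require Import all_boot all_order all_algebra.
From mathcomp Require Import all_classical all_reals all_analysis.
From mathcomp Require Import ring lra measurable_realfun.
Set Implicit Arguments.
Unset Strict Implicit.
Unset Printing Implicit Defensive.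
Import Order.TTheory GRing.Theory Num.Theory.
Local Open Scope classical_set_scope.
Local Open Scope ring_scope.

(* For x in the positive orthant put p := <m, x> and q := <xk, x>, so that the
   objective is -(w ln q^2 + (1 - w) ln p^2).  The point mk = s m + t xk has
   s, t >= 0 chosen (through the angle alpha) so that s <m, mk> = 1 - w and
   t <xk, mk> = w.  Then ln y <= y - 1 gives
     objective x - objective mk >= 2 (1 - <mk, x>) = |x - mk|^2 >= 0,
   so mk is a minimiser, and any minimiser equals mk almost everywhere. *)

Section RealFacts.
Context {R : realType}.
Implicit Types (w C Q p q x y : R).

Lemma ln_le_subr1 x : 0 < x -> ln x <= x - 1.
Proof.
by move=> x0; have := @le_ln1Dx R (x - 1); rewrite addrCA subrr addr0; apply; lra.
Qed.

Lemma lnX2_sub_le x y : 0 < x -> 0 < y ->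
  ln (x ^+ 2) - ln (y ^+ 2) <= 2 * (x / y - 1).
Proof.
move=> x0 y0; have := ln_le_subr1 (divr_gt0 x0 y0).
by rewrite ln_div ?posrE // !lnXn // !mulr2n; lra.
Qed.

Lemma weighted_lnX2_gap w C Q p q :
  0 <= w -> w <= 1 -> 0 < C -> 0 < Q -> 0 < p -> (0 < q \/ w = 0) ->
  w * - ln (Q ^+ 2) + (1 - w) * - ln (C ^+ 2)
    + 2 * (1 - ((1 - w) / C * p + w / Q * q))
  <= w * - ln (q ^+ 2) + (1 - w) * - ln (p ^+ 2).
Proof.
move=> w0 w1 C0 Q0 p0 hq.
have hp : (1 - w) * (ln (p ^+ 2) - ln (C ^+ 2)) <= (1 - w) * (2 * (p / C - 1)).
  by rewrite ler_wpM2l ?subr_ge0 // lnX2_sub_le.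
have {}hq : w * (ln (q ^+ 2) - ln (Q ^+ 2)) <= w * (2 * (q / Q - 1)).
  by case: hq => [q0|->]; rewrite ?mul0r // ler_wpM2l // lnX2_sub_le.
rewrite mulrAC -mulrA [w / Q * q]mulrAC -[w * q / Q]mulrA; lra.
Qed.

End RealFacts.

Section MinimizerCoefficients.
Context {R : realType}.

Lemma pos_root_quadratic (c w : R) : 0 < c -> 0 <= w -> w < 1 ->
  let T := (-1 + Num.sqrt (4 * c ^+ 2 * (1 - w) - 4 * c ^+ 2 * (1 - w) ^+ 2 + 1))
           / (2 * c * (1 - w)) in
  0 <= T /\ (1 - w) * c * T ^+ 2 + T - w * c = 0.
Proof.
move=> c0 w0 w1 T.
pose D := 4 * c ^+ 2 * (1 - w) - 4 * c ^+ 2 * (1 - w) ^+ 2 + 1.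
have D1 : 1 <= D.
  have : 0 <= c ^+ 2 * (1 - w) * w by rewrite !mulr_ge0 ?sqr_ge0 //; lra.
  rewrite /D; lra.
have sD1 : 1 <= Num.sqrt D by rewrite -sqrtr1 ler_sqrt //; lra.
have den0 : 0 < 2 * c * (1 - w) by rewrite !mulr_gt0 // subr_gt0.
split; first by rewrite /T divr_ge0 //; lra.
have eT : T * (2 * c * (1 - w)) = Num.sqrt D - 1.
  by rewrite /T divfK ?gt_eqF //; ring.
have eD : Num.sqrt D ^+ 2 = D by rewrite sqr_sqrtr //; lra.
have den2 : 2 * (2 * c * (1 - w)) != 0 by rewrite mulf_neq0 ?gt_eqF.
apply: (mulfI den2); rewrite mulr0.
have -> : 2 * (2 * c * (1 - w)) * ((1 - w) * c * T ^+ 2 + T - w * c) =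
  (T * (2 * c * (1 - w))) ^+ 2 + 2 * (T * (2 * c * (1 - w)))
  - 4 * w * (1 - w) * c ^+ 2 by ring.
by move: eD; rewrite eT /D; lra.
Qed.

Lemma sin_atan (x : R) : sin (atan x) = x * cos (atan x).
Proof.
have cos_gt0 : 0 < cos (atan x).
  by rewrite cos_atan invr_gt0 sqrtr_gt0 ltr_pwDl ?sqr_ge0.
by rewrite -{2}(atanK x) /tan divfK ?gt_eqF.
Qed.

(* [S], [K] and [T] stand for [sin theta], [cos alpha] and [tan alpha]. *)
Lemma stationary_coefficients (a w S K T : R) : w <= 1 ->
  0 < S -> S ^+ 2 = 1 - a ^+ 2 -> 0 < K -> K ^+ 2 * (1 + T ^+ 2) = 1 ->
  0 <= T -> (1 - w) * S * T ^+ 2 + a * T - w * S = 0 ->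
  let s := K * (S - a * T) / S in
  let t := T * K / S in
  [/\ 0 <= s, 0 <= t, s * (s + t * a) = 1 - w & t * (s * a + t) = w].
Proof.
move=> w1 S0 eS K0 eK T0 quad s t.
have hS : S - a * T = (1 - w) * S * (1 + T ^+ 2).
  by apply: subr0_eq; rewrite -(mulr0 (- 1)) -quad; ring.
have hT : T * (a + S * T) = w * S * (1 + T ^+ 2).
  by apply: subr0_eq; rewrite -quad; ring.
have sC : s + t * a = K by rewrite /s /t; field; rewrite gt_eqF.
have sQ : s * a + t = K * (a + S * T).
  apply: subr0_eq; rewrite -(mulr0 (K * T / S)) -(subrr (S ^+ 2)) {1}eS /s /t.
  by field; rewrite gt_eqF.
split.
- rewrite /s hS; apply: divr_ge0 (ltW S0); apply: mulr_ge0 (ltW K0) _.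
  by apply: mulr_ge0 (mulr_ge0 _ (ltW S0)) (addr_ge0 ler01 (sqr_ge0 T)); lra.
- by apply: divr_ge0 (ltW S0); exact: mulr_ge0 T0 (ltW K0).
- transitivity ((1 - w) * (K ^+ 2 * (1 + T ^+ 2))); last by rewrite eK mulr1.
  by rewrite sC /s hS; field; rewrite gt_eqF.
- transitivity (w * (K ^+ 2 * (1 + T ^+ 2))); last by rewrite eK mulr1.
  have -> : t * (s * a + t) = K ^+ 2 * (T * (a + S * T)) / S.
    by rewrite sQ /t; field; rewrite gt_eqF.
  by rewrite hT; field; rewrite gt_eqF.
Qed.

Lemma minimizer_coefficients (a w : R) : 0 < a -> a < 1 -> 0 <= w -> w < 1 ->
  let theta := acos a in
  let c := tan theta in
  let alpha := atan ((-1 + Num.sqrt (4 * c ^+ 2 * (1 - w)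
                        - 4 * c ^+ 2 * (1 - w) ^+ 2 + 1))
                     / (2 * c * (1 - w))) in
  let s := sin (theta - alpha) / sin theta in
  let t := sin alpha / sin theta in
  [/\ 0 <= s, 0 <= t, s * (s + t * a) = 1 - w & t * (s * a + t) = w].
Proof.
move=> a0 a1 w0 w1 theta c alpha s t.
have a_itv : -1 <= a <= 1 by apply/andP; split; lra.
have a2 : 0 < 1 - a ^+ 2 by rewrite subr_gt0 expr2; nra.
set S := Num.sqrt (1 - a ^+ 2).
have S0 : 0 < S by rewrite sqrtr_gt0.
have cos_theta : cos theta = a by rewrite acosK // in_itv.
have sin_theta : sin theta = S by rewrite sin_acos.
have ec : c = S / a by rewrite /c /tan cos_theta sin_theta.
have c0 : 0 < c by rewrite ec divr_gt0.
have [T0 quad] := pos_root_quadratic c0 w0 w1.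
set T := _ / _ in T0 quad.
have T2 : 0 < 1 + T ^+ 2 by rewrite ltr_pwDl ?sqr_ge0.
set K := (Num.sqrt (1 + T ^+ 2))^-1.
have cos_alpha : cos alpha = K by rewrite cos_atan.
have -> : s = K * (S - a * T) / S.
  rewrite /s sinB cos_theta sin_theta /alpha sin_atan -/alpha -/T cos_alpha.
  by congr (_ / S); ring.
have -> : t = T * K / S.
  by rewrite /t /alpha sin_atan -/alpha -/T cos_alpha sin_theta.
apply: stationary_coefficients => //.
- exact: ltW.
- by rewrite sqr_sqrtr // ltW.
- by rewrite invr_gt0 sqrtr_gt0.
- by rewrite exprVn sqr_sqrtr ?mulVf ?gt_eqF ?ltW.
- by rewrite -(mulr0 a) -quad ec; field; rewrite gt_eqF.
Qed.

End MinimizerCoefficients.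

Section L2Geometry.
Context {R : realType} {n : nat} (mu : {measure set (n.-tuple R) -> \bar R}).
Local Notation T := (n.-tuple R).
Implicit Types (f g h : T -> R) (a b : R).

Lemma L2_integrable_mul f g : L2 mu f -> L2 mu g ->
  mu.-integrable setT (fun x => (f x * g x)%:E).
Proof.
move=> [mf if2] [mg ig2].
apply: (le_integrable measurableT _ _ (integrableD measurableT if2 ig2)).
  by apply/measurable_EFinP; exact: measurable_funM.
move=> x _ /=; rewrite lee_fin [leRHS]ger0_norm ?addr_ge0 ?sqr_ge0 //.
by rewrite ler_norml; apply/andP; split; nra.
Qed.

Lemma L2_lincomb a b f g : L2 mu f -> L2 mu g -> L2 mu (fun x => a * f x + b * g x).
Proof.
move=> [mf if2] [mg ig2].
have mfg : measurable_fun setT (fun x => a * f x + b * g x).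
  by apply: measurable_funD; apply: measurable_funM => //; exact: measurable_cst.
split=> //; have i1 := integrableZl measurableT (2 * a ^+ 2) if2.
have i2 := integrableZl measurableT (2 * b ^+ 2) ig2.
apply: (le_integrable measurableT _ _ (integrableD measurableT i1 i2)).
  by apply/measurable_EFinP; exact: measurable_funX mfg.
move=> x _ /=; rewrite lee_fin ger0_norm ?sqr_ge0 //.
by apply: le_trans (ler_norm _); have := sqr_ge0 (a * f x - b * g x); nra.
Qed.

Lemma ip_sym f g : ip mu f g = ip mu g f.
Proof. by apply: eq_Rintegral => x _; rewrite mulrC. Qed.

Lemma ip_lincombl a b f g h : L2 mu f -> L2 mu g -> L2 mu h ->
  ip mu (fun x => a * f x + b * g x) h = a * ip mu f h + b * ip mu g h.
Proof.
move=> Lf Lg Lh; have ifh := L2_integrable_mul Lf Lh.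
have igh := L2_integrable_mul Lg Lh.
rewrite /ip -(RintegralZl a measurableT ifh) -(RintegralZl b measurableT igh).
rewrite -RintegralD //; first by apply: eq_Rintegral => x _; rewrite mulrDl !mulrA.
- apply: (eq_integrable measurableT _ _ _ (integrableZl measurableT a ifh)).
  by move=> x _; rewrite /= EFinM.
- apply: (eq_integrable measurableT _ _ _ (integrableZl measurableT b igh)).
  by move=> x _; rewrite /= EFinM.
Qed.

Lemma ip_lincombr a b f g h : L2 mu f -> L2 mu g -> L2 mu h ->
  ip mu h (fun x => a * f x + b * g x) = a * ip mu h f + b * ip mu h g.
Proof. by move=> Lf Lg Lh; rewrite ip_sym ip_lincombl // (ip_sym f) (ip_sym g). Qed.

Lemma ip_self_ge0 f : 0 <= ip mu f f.
Proof. by apply: Rintegral_ge0 => x _; rewrite -expr2 sqr_ge0. Qed.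

Lemma ip_self_eq0 f : L2 mu f -> ip mu f f = 0 -> f = (fun=> 0) %[ae mu].
Proof.
move=> Lf ff0; have iff := L2_integrable_mul Lf Lf.
have mff : measurable_fun setT (fun x => (f x * f x)%:E) by case/integrableP: iff.
have : (\int[mu]_(x in setT) `|(f x * f x)%:E| = 0)%E.
  rewrite (eq_integral (fun x => (f x * f x)%:E)); last first.
    by move=> x _; rewrite abse_EFin ger0_norm // -expr2 sqr_ge0.
  rewrite -(fineK (integrable_fin_num measurableT iff)).
  by move: ff0; rewrite /ip /Rintegral => ->.
move/(ae_eq_integral_abs _ measurableT mff); apply: filterS => x /[apply] /= /eqP.
by rewrite eqe mulf_eq0 orbb => /eqP.
Qed.

Lemma ip_ge0 f g : L2 mu f -> L2 mu g ->
  {ae mu, forall x, 0 <= f x} -> {ae mu, forall x, 0 <= g x} -> 0 <= ip mu f g.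
Proof.
move=> Lf Lg f0 g0; have ifg := L2_integrable_mul Lf Lg.
have mfg : measurable_fun setT (fun x => (f x * g x)%:E) by case/integrableP: ifg.
rewrite /ip /Rintegral.
rewrite (ae_eq_integral (fun x => `|(f x * g x)%:E|)%E _ measurableT mfg).
- by apply: fine_ge0; apply: integral_ge0.
- exact: measurableT_comp.
- apply: filterS2 f0 g0 => x fx gx _.
  by rewrite abse_EFin ger0_norm // mulr_ge0.
Qed.

Lemma ip_unit_sub f g : L2 mu f -> L2 mu g -> ip mu f f = 1 -> ip mu g g = 1 ->
  let d := fun x => 1 * f x + -1 * g x in ip mu d d = 2 * (1 - ip mu f g).
Proof.
move=> Lf Lg ff gg d; have Ld : L2 mu d := L2_lincomb 1 (-1) Lf Lg.
by rewrite ip_lincombl // !ip_lincombr // ff gg (ip_sym g f); ring.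
Qed.

Lemma ip_unit_le1 f g : L2 mu f -> L2 mu g -> ip mu f f = 1 -> ip mu g g = 1 ->
  ip mu f g <= 1.
Proof.
move=> Lf Lg ff gg; have := ip_self_ge0 (fun x => 1 * f x + -1 * g x).
by rewrite ip_unit_sub //; lra.
Qed.

Lemma ip_unit_eq1 f g : L2 mu f -> L2 mu g -> ip mu f f = 1 -> ip mu g g = 1 ->
  ip mu f g = 1 -> f = g %[ae mu].
Proof.
move=> Lf Lg ff gg fg1; have := ip_self_eq0 (L2_lincomb 1 (-1) Lf Lg).
rewrite ip_unit_sub // fg1 subrr mulr0 => /(_ erefl).
by apply: filterS => x /= h; lra.
Qed.

End L2Geometry.

Section Objective.
Context {R : realType} {n : nat} (mu : {measure set (n.-tuple R) -> \bar R}).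
Implicit Types (f g xk m x : n.-tuple R -> R) (w : R).

Lemma dS_sqr f g : 0 < ip mu f g -> ip mu f g <= 1 ->
  (dS mu f g * dS mu f g = (- ln (ip mu f g ^+ 2))%:E)%E.
Proof.
move=> fg0 fg1; rewrite /dS gt_eqF // -EFinM -expr2 sqr_sqrtr // oppr_ge0 ln_le0 //.
by rewrite expr_le1 // ltW.
Qed.

Lemma dS_sqr_ge0 f g : (0 <= dS mu f g * dS mu f g)%E.
Proof.
rewrite /dS; case: ifP => _; first by rewrite mulyy leey.
by rewrite -EFinM lee_fin mulr_ge0 ?sqrtr_ge0.
Qed.

Lemma dS_sqr_ip0 f g : ip mu f g = 0 -> (dS mu f g * dS mu f g = +oo)%E.
Proof. by move=> fg0; rewrite /dS fg0 eqxx mulyy. Qed.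

Lemma objective_fin w xk m x :
  0 < ip mu m x -> ip mu m x <= 1 -> ip mu xk x <= 1 -> (0 < ip mu xk x \/ w = 0) ->
  objective mu w xk m x =
  (w * - ln (ip mu xk x ^+ 2) + (1 - w) * - ln (ip mu m x ^+ 2))%:E.
Proof.
move=> p0 p1 q1 hq; rewrite /objective (dS_sqr p0 p1) -EFinM EFinD; congr (_ + _)%E.
case: hq => [q0|->]; first by rewrite (dS_sqr q0 q1) EFinM.
by rewrite mul0e mul0r.
Qed.

Lemma objective_infty w xk m x : 0 <= w -> w < 1 ->
  ip mu m x = 0 \/ (ip mu xk x = 0 /\ 0 < w) -> objective mu w xk m x = +oo%E.
Proof.
move=> w0 w1 [p0|[q0 wpos]]; rewrite /objective.
- rewrite (dS_sqr_ip0 p0) gt0_muley ?lte_fin ?subr_gt0 // addey // gt_eqF //.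
  by rewrite (lt_le_trans ltNy0) // mule_ge0 ?lee_fin ?dS_sqr_ge0.
- rewrite (dS_sqr_ip0 q0) gt0_muley ?lte_fin // addye // gt_eqF //.
  by rewrite (lt_le_trans ltNy0) // mule_ge0 ?lee_fin ?subr_ge0 ?dS_sqr_ge0 // ltW.
Qed.

End Objective.

Section Minimizer.
Context {R : realType} {n : nat} (mu : {measure set (n.-tuple R) -> \bar R}).
Variables (m xk : n.-tuple R -> R) (w s t : R).
Let a := ip mu m xk.
Let C := s + t * a.
Let Q := s * a + t.
Hypotheses (hm : Horth mu m) (hxk : Horth mu xk) (a_gt0 : 0 < a).
Hypotheses (w_ge0 : 0 <= w) (w_lt1 : w < 1) (s_ge0 : 0 <= s) (t_ge0 : 0 <= t).
(* First-order conditions: [C] and [Q] are the inner products of [mk] with [m]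
   and [xk], so these say that [mk] is proportional to the gradient
   [(1 - w) / C * m + w / Q * xk] of the objective. *)
Hypotheses (s_stationary : s * C = 1 - w) (t_stationary : t * Q = w).

Let mk := fun x => s * m x + t * xk x.

Let Lm : L2 mu m := hm.1.
Let Lxk : L2 mu xk := hxk.1.
Let Lmk : L2 mu mk := L2_lincomb s t Lm Lxk.

Let sC_gt0 : 0 < s /\ 0 < C.
Proof.
have C_ge0 : 0 <= C by rewrite addr_ge0 // mulr_ge0 // ltW.
by apply/andP; rewrite -mulr_ge0_gt0 // s_stationary subr_gt0.
Qed.

Let C_gt0 : 0 < C := sC_gt0.2.

Let Q_gt0 : 0 < Q.
Proof. by rewrite /Q ltr_wpDr // mulr_gt0 // sC_gt0.1. Qed.

Lemma ip_mk_l x : L2 mu x -> ip mu mk x = s * ip mu m x + t * ip mu xk x.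
Proof. exact: ip_lincombl. Qed.

Lemma ip_m_mk : ip mu m mk = C.
Proof. by rewrite ip_lincombr // hm.2.1 mulr1. Qed.

Lemma ip_xk_mk : ip mu xk mk = Q.
Proof. by rewrite ip_lincombr // hxk.2.1 ip_sym mulr1. Qed.

Lemma Horth_mk : Horth mu mk.
Proof.
split=> //; split.
  by rewrite ip_mk_l // ip_m_mk ip_xk_mk s_stationary t_stationary subrK.
by apply: filterS2 hm.2.2 hxk.2.2 => x m0 xk0; rewrite addr_ge0 // mulr_ge0.
Qed.

Let Horth_ip_le1 f g : Horth mu f -> Horth mu g -> ip mu f g <= 1.
Proof. by move=> [Lf [ff _]] [Lg [gg _]]; exact: ip_unit_le1. Qed.

Lemma objective_mk :
  objective mu w xk m mk = (w * - ln (Q ^+ 2) + (1 - w) * - ln (C ^+ 2))%:E.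
Proof.
have := Horth_ip_le1 hm Horth_mk; have := Horth_ip_le1 hxk Horth_mk.
rewrite ip_m_mk ip_xk_mk => Q1 C1.
by rewrite objective_fin ?ip_m_mk ?ip_xk_mk //; left; exact: Q_gt0.
Qed.

Lemma objective_gap x : Horth mu x ->
  (objective mu w xk m mk + (2 * (1 - ip mu mk x))%:E <= objective mu w xk m x)%E.
Proof.
move=> hx; have [Lx [_ x0]] := hx; rewrite ip_mk_l //.
have := Horth_ip_le1 hm hx; have := Horth_ip_le1 hxk hx.
have := ip_ge0 Lm Lx hm.2.2 x0; have := ip_ge0 Lxk Lx hxk.2.2 x0.
set p := ip mu m x; set q := ip mu xk x => q0 p0 q1 p1.
have [p_eq0|p_gt0] : p = 0 \/ 0 < p by move: p0; rewrite le0r => /predU1P.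
  by rewrite [X in (_ <= X)%E]objective_infty ?leey //; left.
have [[q_eq0 w_gt0]|hq] : (q = 0 /\ 0 < w) \/ (0 < q \/ w = 0).
  move: q0 w_ge0; rewrite !le0r.
  by move=> /predU1P[q_eq0|q_gt0] /predU1P[w_eq0|w_gt0]; tauto.
  by rewrite [X in (_ <= X)%E]objective_infty ?leey //; right.
rewrite objective_mk objective_fin // -EFinD lee_fin.
have -> : s = (1 - w) / C by rewrite -s_stationary mulfK // gt_eqF // C_gt0.
have -> : t = w / Q by rewrite -t_stationary mulfK // gt_eqF // Q_gt0.
by apply: weighted_lnX2_gap => //; exact: ltW.
Qed.

Lemma objective_argmin :
  [/\ Horth mu mk,
      (forall x, Horth mu x ->
         (objective mu w xk m mk <= objective mu w xk m x)%E)
    & (forall x, Horth mu x ->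
         (forall y, Horth mu y ->
            (objective mu w xk m x <= objective mu w xk m y)%E) ->
         x = mk %[ae mu])].
Proof.
split; first exact: Horth_mk.
  move=> x hx; apply: le_trans (objective_gap hx).
  by rewrite leeDl // lee_fin mulr_ge0 // subr_ge0 (Horth_ip_le1 Horth_mk hx).
move=> x hx x_min; have := le_trans (objective_gap hx) (x_min _ Horth_mk).
rewrite objective_mk -EFinD lee_fin gerDl pmulr_rle0 // subr_le0 => mkx1.
have [Lx [xx _]] := hx; have [_ [mkmk _]] := Horth_mk.
apply: ip_unit_eq1 => //; rewrite ip_sym.
by apply/eqP; rewrite eq_le mkx1 (Horth_ip_le1 Horth_mk hx).
Qed.

End Minimizer.

Theorem proposition3 (R : realType) (n : nat)
  (mu : {measure set (n.-tuple R) -> \bar R}) (hmu : is_lebesgue_Rn mu)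
  (m xk : n.-tuple R -> R) (w : R)
  (hm : Horth mu m) (hxk : Horth mu xk)
  (hpos : 0 < ip mu m xk) (hneq : ~ (m = xk %[ae mu]))
  (hw0 : 0 <= w) (hw1 : w < 1) :
  let theta := acos (ip mu m xk) in
  let c := tan theta in
  let alpha := atan ((-1 + Num.sqrt (4 * c ^+ 2 * (1 - w)
                        - 4 * c ^+ 2 * (1 - w) ^+ 2 + 1))
                     / (2 * c * (1 - w))) in
  let mk := fun x => sin (theta - alpha) / sin theta * m x
                     + sin alpha / sin theta * xk x in
  [/\ Horth mu mk,
      (forall x, Horth mu x ->
         (objective mu w xk m mk <= objective mu w xk m x)%E)
    & (forall x, Horth mu x ->
         (forall y, Horth mu y ->
            (objective mu w xk m x <= objective mu w xk m y)%E) ->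
         x = mk %[ae mu])].
Proof.
move=> theta c alpha mk.
have [Lm [mm _]] := hm; have [Lxk [xkxk _]] := hxk.
have a_lt1 : ip mu m xk < 1.
  rewrite lt_neqAle ip_unit_le1 // andbT.
  by apply/eqP => mxk1; apply: hneq; exact: ip_unit_eq1.
have [s_ge0 t_ge0 s_stationary t_stationary] :=
  minimizer_coefficients hpos a_lt1 hw0 hw1.
exact: objective_argmin.
Qed.
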